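(* Let $A$ be a finite abelian group and let $G=A\rtimes(\mathbb{Z}/2\mathbb{Z})$ be a semidirect product. Then $G$ is mixable if and only if $G$ is $2'$-simple.
   Context: A finite group $G$ is mixable if there exist fixed elements $g_1,\dots,g_k\in G$ and independent Bernoulli random variables $\epsilon_i\sim\mathrm{Ber}(p_i)$, $p_i\in[0,1]$, such that the random product $g_1^{\epsilon_1}\cdots g_k^{\epsilon_k}$ is distributed exactly uniformly on $G$. A finite group is $2'$-simple if it has no proper normal subgroup of odd index (equivalently, no nontrivial quotient of odd order). *)

From HB Require Import structures.
From mathcomp Require Import all_boot all_order all_algebra all_fingroup all_solvable.
From mathcomp Require Import reals.
Set Implicit Arguments. Unset Strict Implicit. Unset Printing Implicit Defensive.
Import Order.TTheory GRing.Theory Num.Theory.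

(* Probability that the random product g_0^{e_0} ... g_{k-1}^{e_{k-1}} equals x,
   where e_i ~ Ber(p_i) independently: sum over outcomes e of the product weight. *)
Definition prod_prob (R : realType) (gT : finGroupType) (k : nat)
    (g : 'I_k -> gT) (p : 'I_k -> R) (x : gT) : R :=
  (\sum_(e : {ffun 'I_k -> bool} |
          ((\prod_(i < k) (if e i then g i else 1)) == x)%g)
     \prod_(i < k) (if e i then p i else 1 - p i))%R.

Definition mixable (R : realType) (gT : finGroupType) (G : {group gT}) : Prop :=
  exists (k : nat) (g : 'I_k -> gT) (p : 'I_k -> R),
    [/\ (forall i, g i \in G),
        (forall i, (0 <= p i <= 1)%R) &
        (forall x, x \in G -> prod_prob g p x = (#|G|%:R)^-1)%R].

Definition two'_simple (gT : finGroupType) (G : {group gT}) : Prop :=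
  forall N : {group gT}, (N <| G)%g -> odd #|G : N|%g -> N :=: G.

From HB Require Import structures.
From mathcomp Require Import all_boot all_order all_algebra all_fingroup all_solvable.
From mathcomp Require Import reals.
From mathcomp Require Import zify ring.
Set Implicit Arguments. Unset Strict Implicit. Unset Printing Implicit Defensive.
Import Order.TTheory GRing.Theory Num.Theory.

(* If [N <| G] has odd index and the random product is uniform, so are its coset masses modulo
   [N].  Peeling off the first factor [g ^ e] with [e ~ Ber(p)], the deviation [nu] of the coset
   masses of the remaining product satisfies [(1 - p) nu(w) + p nu(g^-1 w) = 0], hence
   [nu = (-a) ^+ n nu] with [a >= 0] and [n = #|G : N|] odd (as [g ^+ n \in N]); so [nu = 0].
   Down to the empty product, a point mass, constant coset masses force [N = G].

   Conversely let [G = A ><| <[h]>] be 2'-simple.  We mix [D <*> <[h]>] for a growing chain of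
   [h]-stable subgroups [D] of [A], starting from [D = 1].  Given [D < A], pick [y \in A :\: D]
   and [r \in D <*> <[h]>] such that [r^-1] acts on the cosets [y ^+ j *: (D <*> <[h]>)] as
   [j |-> - j].  A walk of Bernoulli steps [r * y ^+ k] then spreads the mass evenly over these
   cosets, and prepending it to a mixing sequence for [D <*> <[h]>] mixes [D <*> <[y]> <*> <[h]>].
   Either some commutator [[~ x, h]] lies outside [D], and [y := [~ x, h]], [r := h] work as [h]
   inverts [y]; or [[~: A, <[h]>] \subset D], and then [D <*> <[h]>] is normal of index
   [#|A : D|], which 2'-simplicity makes even, so some [y] has order 2 modulo [D] and [r := 1]
   works. *)

Section Mixing.
Variables (R : realType) (gT : finGroupType).
Local Open Scope ring_scope.
Implicit Types (s : seq (gT * R)) (x y z : gT).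

Fixpoint prod_law s x : R :=
  if s is (g, p) :: s' then (1 - p) * prod_law s' x + p * prod_law s' (g^-1 * x)%g
  else (x == 1%g)%:R.

Definition ffcons k (b : bool) (e : {ffun 'I_k -> bool}) : {ffun 'I_k.+1 -> bool} :=
  [ffun i => if unlift ord0 i is Some j then e j else b].

Lemma ffcons_bij k :
  bijective (fun be : bool * {ffun 'I_k -> bool} => ffcons be.1 be.2).
Proof.
exists (fun e : {ffun 'I_k.+1 -> bool} => (e ord0, [ffun j => e (lift ord0 j)])).
  case=> b e; rewrite /ffcons /= ffunE unlift_none; congr (_, _).
  by apply/ffunP=> j; rewrite !ffunE liftK.
move=> e; apply/ffunP=> i; rewrite /ffcons ffunE /=.
by case: unliftP=> [j ->|->]; rewrite ?ffunE.
Qed.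

Lemma prod_probS k (g : 'I_k.+1 -> gT) (p : 'I_k.+1 -> R) x :
  let g' i := g (lift ord0 i) in let p' i := p (lift ord0 i) in
  prod_prob g p x =
    (1 - p ord0) * prod_prob g' p' x + p ord0 * prod_prob g' p' ((g ord0)^-1 * x)%g.
Proof.
move=> g' p'; rewrite /prod_prob big_mkcond (reindex _ (onW_bij _ (ffcons_bij k))) /=.
have sum_pair (F : bool * {ffun 'I_k -> bool} -> R) : \sum_be F be = \sum_b \sum_e F (b, e).
  by rewrite pair_big; apply: eq_bigr => -[].
rewrite sum_pair big_bool /= addrC.
rewrite !mulr_sumr; congr (_ + _); rewrite [RHS]big_mkcond; apply: eq_bigr => e _;
  rewrite !big_ord_recl /ffcons !ffunE unlift_none /=;
  under eq_bigr do rewrite ffunE liftK;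
  under [X in _ * X]eq_bigr do rewrite ffunE liftK.
  by rewrite mul1g; case: ifP => _; rewrite ?mulr0.
by rewrite -(inj_eq (mulgI (g ord0)^-1%g)) mulKg; case: ifP => _; rewrite ?mulr0.
Qed.

Lemma prod_prob_law k (g : 'I_k -> gT) (p : 'I_k -> R) x :
  prod_prob g p x = prod_law [seq (g i, p i) | i <- enum 'I_k] x.
Proof.
elim: k g p x => [|k IHk] g p x; last first.
  by rewrite prod_probS enum_ordSl /= -map_comp !IHk.
rewrite /prod_prob enum_ord0 /=.
under eq_bigl do rewrite big_ord0.
under eq_bigr do rewrite big_ord0.
rewrite sumr_const eq_sym; have [<-|n1x] := eqVneq 1%g x.
  rewrite (@eq_card _ _ predT) => [|e]; last exact: eqxx.
  by rewrite card_ffun card_bool card_ord.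
by rewrite (@eq_card _ _ pred0) => [|e]; [rewrite card0 | exact: negbTE].
Qed.

Definition bern_seq (G : {set gT}) s :=
  all (fun gp => (gp.1 \in G) && (0 <= gp.2 <= 1)) s.

Definition mixes s (G : {set gT}) :=
  bern_seq G s /\ forall x, prod_law s x = (x \in G)%:R / #|G|%:R.

Lemma prod_law_out (G : {group gT}) s x : bern_seq G s -> x \notin G -> prod_law s x = 0.
Proof.
elim: s x => [|[g p] s IHs] x /=; first by case: eqP => // -> _; rewrite group1.
case/andP=> /andP[gG _] sG xG.
by rewrite !IHs ?mulr0 ?addr0 // groupMl ?groupV.
Qed.

Lemma mixableP (G : {group gT}) : mixable R G <-> exists s, mixes s G.
Proof.
split=> [[k [g [p [gG p01 unifG]]]] | [s [sG unifG]]].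
  have sG : bern_seq G [seq (g i, p i) | i <- enum 'I_k].
    by rewrite /bern_seq all_map; apply/allP=> i _ /=; rewrite gG p01.
  exists [seq (g i, p i) | i <- enum 'I_k]; split=> // x.
  have [Gx|notGx] := boolP (x \in G); first by rewrite -prod_prob_law unifG ?mul1r.
  by rewrite mul0r (prod_law_out sG).
pose gp0 : gT * R := (1%g, 0).
have sE : [seq ((nth gp0 s i).1, (nth gp0 s i).2) | i : 'I_(size s) <- enum 'I_(size s)] = s.
  rewrite (eq_map (g := fun i : 'I_(size s) => nth gp0 s i)) => [|i]; last by case: (nth gp0 s i).
  by rewrite (map_comp (nth gp0 s) val) val_enum_ord -/(mkseq _ _) mkseq_nth.
have sGi (i : 'I_(size s)) := allP sG _ (mem_nth gp0 (ltn_ord i)).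
exists (size s), (fun i => (nth gp0 s i).1), (fun i => (nth gp0 s i).2); split.
- by move=> i; case/andP: (sGi i).
- by move=> i; case/andP: (sGi i).
- by move=> x xG; rewrite prod_prob_law sE unifG xG mul1r.
Qed.

Lemma mixes1 : mixes [::] 1%G.
Proof. by split=> // x; rewrite /= inE cards1 divr1. Qed.

Definition coset_mass (d : gT -> R) (K : {set gT}) x := \sum_(z in (x *: K)%g) d z.

Lemma coset_mass_nil (K : {set gT}) x : coset_mass (prod_law [::]) K x = (1 \in x *: K)%g%:R.
Proof.
rewrite /coset_mass /=; case: (boolP (1 \in x *: K)%g) => K1.
  by rewrite (bigD1 1%g) //= eqxx big1 ?addr0 // => z /andP[_ /negbTE ->].
by rewrite big1 // => z zK; case: eqP => // z1; rewrite -z1 zK in K1.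
Qed.

Lemma coset_mass_cons g p s (K : {set gT}) x :
  coset_mass (prod_law ((g, p) :: s)) K x =
    (1 - p) * coset_mass (prod_law s) K x + p * coset_mass (prod_law s) K (g^-1 * x)%g.
Proof.
rewrite /coset_mass /= big_split /= -!mulr_sumr; congr (_ + _ * _).
rewrite (reindex_inj (mulgI g)) /=; apply: eq_big => [z|z _]; last by rewrite mulKg.
by rewrite !mem_lcoset invMg invgK !mulgA.
Qed.

Lemma eq_coset_mass d (K : {set gT}) x z :
  (x *: K = z *: K)%g -> coset_mass d K x = coset_mass d K z.
Proof. by rewrite /coset_mass => ->. Qed.

Lemma expg_index_mem (G N : {group gT}) g :
  (N <| G)%g -> g \in G -> (g ^+ #|G : N| \in N)%g.
Proof.
case/andP=> sNG nNG Gg; have nNg := subsetP nNG g Gg.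
apply: coset_idr; first by rewrite groupX.
by rewrite morphX // -card_quotient // expg_cardG // mem_quotient.
Qed.

Lemma bernoulli_avg_eq0 (G N : {group gT}) g p (nu : gT -> R) :
  (N <| G)%g -> odd #|G : N|%g -> g \in G -> 0 <= p <= 1 ->
  (forall x k, k \in N -> nu (x * k)%g = nu x) ->
  {in G, forall w, (1 - p) * nu w + p * nu (g^-1 * w)%g = 0} ->
  {in G, forall x, nu x = 0}.
Proof.
move=> nNG oddGN Gg /andP[p_ge0 p_le1] nuN avg0 x Gx.
have [p0|p_neq0] := eqVneq p 0; first by have := avg0 x Gx; rewrite p0 subr0 mul1r mul0r addr0.
pose a := (1 - p) / p.
have a_ge0 : 0 <= a by rewrite divr_ge0 // subr_ge0.
have nu_step w : w \in G -> nu (g^-1 * w)%g = - a * nu w.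
  move=> Gw; apply: (mulfI p_neq0); move/eqP: (avg0 w Gw).
  by rewrite addrC addr_eq0 => /eqP ->; rewrite /a; field.
have nu_iter n w : w \in G -> nu ((g^-1) ^+ n * w)%g = (- a) ^+ n * nu w.
  elim: n w => [|n IHn] w Gw; first by rewrite expg0 mul1g expr0 mul1r.
  by rewrite expgS -mulgA nu_step ?groupM ?groupX ?groupV // IHn // exprS mulrA.
(* [g^-n] lies in [N] for the odd [n = #|G : N|], so [nu x = (- a) ^+ n * nu x = - a ^+ n * nu x]. *)
have := nu_iter #|G : N|%g x Gx.
rewrite conjgC nuN; last first.
  by rewrite memJ_norm ?expg_index_mem ?groupV // (subsetP (normal_norm nNG)).
rewrite exprNn -signr_odd oddGN expr1 mulN1r => nuxE.
have /eqP : (1 + a ^+ #|G : N|%g) * nu x = 0 by rewrite mulrDl mul1r {1}nuxE mulNr addNr.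
by rewrite mulf_eq0 gt_eqF ?ltr_pwDl ?ltr01 ?exprn_ge0 // => /eqP.
Qed.

Lemma coset_mass_cons_const (G N : {group gT}) g p s c :
  (N <| G)%g -> odd #|G : N|%g -> g \in G -> 0 <= p <= 1 ->
  {in G, forall x, coset_mass (prod_law ((g, p) :: s)) N x = c} ->
  {in G, forall x, coset_mass (prod_law s) N x = c}.
Proof.
move=> nNG oddGN Gg p01 massc x Gx; apply/eqP; rewrite -subr_eq0; apply/eqP.
pose nu x := coset_mass (prod_law s) N x - c.
apply: (bernoulli_avg_eq0 (nu := nu)) nNG oddGN Gg p01 _ _ x Gx.
  by move=> w k Nk; rewrite /nu (@eq_coset_mass _ _ (w * k)%g w) // lcosetM lcoset_id.
move=> w Gw; have := massc w Gw; rewrite coset_mass_cons => massw.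
by rewrite /nu -[RHS](subrr c) -[X in _ = X - _]massw; ring.
Qed.

Lemma mixes_two'_simple (G : {group gT}) s : mixes s G -> two'_simple G.
Proof.
move=> [sG unifG] N nNG oddGN; have sNG := normal_sub nNG.
have G_gt0 : (0 < #|G|)%N := cardG_gt0 G.
have : {in G, forall x, coset_mass (prod_law s) N x = #|N|%:R / #|G|%:R}.
  move=> x Gx; rewrite /coset_mass (eq_bigr (fun=> #|G|%:R^-1)).
    by rewrite sumr_const [RHS]mulr_natl -(card_lcoset N x).
  move=> z; rewrite mem_lcoset unifG => Nxz.
  have Gz : z \in G by rewrite -(mulKVg x z) groupM // (subsetP sNG).
  by rewrite Gz mul1r.
clear unifG; elim: s sG => [|[g p] s IHs] /=; last first.
  by case/andP=> /andP[Gg p01] sG massN; apply: IHs (coset_mass_cons_const nNG oddGN Gg p01 massN).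
move=> _ /(_ 1%g (group1 G)); rewrite coset_mass_nil lcoset1 group1.
move/(congr1 ( *%R^~ #|G|%:R)); rewrite mul1r divfK ?pnatr_eq0 -?lt0n //.
by move/eqP; rewrite eqr_nat => /eqP eqGN; apply/eqP; rewrite eqEcard sNG eqGN /=.
Qed.

Lemma bern_seq_sub (K G : {set gT}) s : K \subset G -> bern_seq K s -> bern_seq G s.
Proof.
move=> sKG; elim: s => //= -[g p] s IHs /andP[/andP[Kg ->] /IHs ->].
by rewrite (subsetP sKG).
Qed.

Lemma prod_law_cat s1 s2 x :
  prod_law (s1 ++ s2) x = \sum_y prod_law s1 y * prod_law s2 (y^-1 * x)%g.
Proof.
elim: s1 x => [|[g p] s1 IHs1] x /=.
  rewrite (bigD1 1%g) //= eqxx mul1r invg1 mul1g big1 ?addr0 // => y /negbTE ->.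
  by rewrite mul0r.
rewrite !IHs1; under [RHS]eq_bigr do rewrite mulrDl.
rewrite big_split /= !mulr_sumr; congr (_ + _); first by apply: eq_bigr => y _; rewrite mulrA.
rewrite [RHS](reindex_inj (mulgI g)) /=; apply: eq_bigr => y _.
by rewrite mulKg invMg !mulgA mulrA.
Qed.

Lemma mixes_cat (K G : {group gT}) s1 s2 :
  K \subset G -> bern_seq G s1 ->
  {in G, forall x, coset_mass (prod_law s1) K x = #|K|%:R / #|G|%:R} ->
  mixes s2 K -> mixes (s1 ++ s2) G.
Proof.
move=> sKG s1G massK [s2K unifK]; split.
  by rewrite /bern_seq all_cat; apply/andP; split; last exact: bern_seq_sub s2K.
move=> x; rewrite prod_law_cat.
have -> : \sum_y prod_law s1 y * prod_law s2 (y^-1 * x)%g = coset_mass (prod_law s1) K x / #|K|%:R.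
  rewrite /coset_mass mulr_suml (big_mkcond (fun y => y \in (x *: K)%g)) /=.
  apply: eq_bigr => y _; rewrite unifK mem_lcoset -groupV invMg invgK.
  by case: ifP => _; rewrite ?mul0r ?mulr0 ?mul1r.
have [Gx|notGx] := boolP (x \in G).
  by rewrite massK // mulrAC divff ?mul1r ?pnatr_eq0 -?lt0n ?cardG_gt0.
rewrite mul0r /coset_mass big1 ?mul0r // => y; rewrite mem_lcoset => Kxy.
apply: (prod_law_out s1G); apply: contra notGx => Gy.
by rewrite -(mulKVg y x) groupM // -[(y^-1 * x)%g]invgK invMg invgK groupV (subsetP sKG).
Qed.

Definition walk_mass (m n j : nat) : R :=
  if j == 0%N then (m - n)%:R / m%:R else if (j <= n)%N then m%:R^-1 else 0.

Lemma walk_massS m n j : (n.+1 < m)%N -> (j < m)%N ->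
  walk_mass m n.+1 j =
    (1 - (m - n)%:R^-1) * walk_mass m n j
    + (m - n)%:R^-1 * walk_mass m n (if (j <= n.+1)%N then n.+1 - j else n.+1 + m - j)%N.
Proof.
move=> lt_n1m lt_jm; rewrite /walk_mass.
have m_neq0 : m%:R != 0 :> R by rewrite pnatr_eq0; lia.
have mn_neq0 : (m - n)%:R != 0 :> R by rewrite pnatr_eq0; lia.
have mnE : (m - n)%:R = (m - n.+1)%:R + 1 :> R by rewrite natr1; congr (_%:R); lia.
have [->|j_gt0] := posnP j.
  by rewrite leq0n subn0 /= ltnn mulr0 addr0 mnE; field; rewrite -mnE mn_neq0 m_neq0.
have [le_jn|lt_nj] := leqP j n.
  rewrite leqW // (_ : (n.+1 - j == 0)%N = false) 1?(_ : (n.+1 - j <= n)%N = true) //; [|lia|lia].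
  by rewrite -mulrDl subrK mul1r.
have [->|ne_jn1] := eqVneq j n.+1.
  by rewrite ltnSn subnn eqxx mulr0 add0r; field; rewrite mn_neq0 m_neq0.
rewrite (_ : (j <= n.+1)%N = false) 1?(_ : (n.+1 + m - j == 0)%N = false)
        1?(_ : (n.+1 + m - j <= n)%N = false); [by rewrite !mulr0 addr0 | lia | lia | lia].
Qed.

Definition reflects_cosets (K : {set gT}) r y := forall j, (r^-1 * y ^+ j \in y ^- j *: K)%g.

Section ReflectionWalk.
Variables (K G : {group gT}) (y r : gT) (m : nat).
Hypotheses (sKG : K \subset G) (Gy : y \in G) (Gr : r \in G) (m_gt0 : (0 < m)%N).
Hypotheses (Kym : (y ^+ m \in K)%g) (notKyj : forall j, (0 < j < m)%N -> (y ^+ j \notin K)%g).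
Hypothesis r_reflect : reflects_cosets K r y.
Hypothesis cosets_cover : {in G, forall x, exists j, (x \in y ^+ j *: K)%g}.

(* Left multiplication by [(r * y ^+ k)^-1] sends [y ^+ j *: K] to [y ^- (k + j) *: K], a
   reflection of the m-cycle of cosets.  Step [n] of the walk ([k = m - n], probability
   [1 / (m - n + 1)]) is the reflection [j |-> n - j]: it preserves the mass [1 / m] of the cosets
   [1 .. n - 1] and moves a share [1 / m] of the mass of [K] to the empty coset [y ^+ n *: K]. *)
Fixpoint reflection_walk n : seq (gT * R) :=
  if n is n'.+1 then ((r * y ^+ (m - n))%g, (m - n')%:R^-1) :: reflection_walk n'
  else [::].

Lemma bern_seq_reflection_walk n : bern_seq G (reflection_walk n).
Proof.
elim: n => //= n ->; rewrite groupM ?groupX // invr_ge0 ler0n /=.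
by case: (m - n)%N => [|k]; rewrite ?invr0 ?ler01 // invf_le1 ?ltr0Sn // ler1n.
Qed.

Lemma lcoset_expg_mod a : (y ^+ a *: K)%g = (y ^+ (a %% m) *: K)%g.
Proof. by rewrite {1}(divn_eq a m) addnC expgD mulnC expgM lcosetM (lcoset_id (groupX _ Kym)). Qed.

Lemma coset_mass_reflect d i k j : (m %| i + k + j)%N ->
  coset_mass d K ((r * y ^+ k)^-1 * y ^+ j)%g = coset_mass d K (y ^+ i).
Proof.
case/dvdnP=> q ijkE; apply: eq_coset_mass.
rewrite invMg -mulgA lcosetM (lcoset_eqP (r_reflect j)) -lcosetM -invMg -expgD.
apply/lcoset_eqP; rewrite mem_lcoset -invMg -expgD groupV (_ : j + k + i = m * q)%N; last lia.
by rewrite expgM groupX.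
Qed.

Lemma coset_mass_reflection_walk n j : (n < m)%N -> (j < m)%N ->
  coset_mass (prod_law (reflection_walk n)) K (y ^+ j) = walk_mass m n j.
Proof.
elim: n j => [|n IHn] j lt_nm lt_jm.
  rewrite coset_mass_nil mem_lcoset mulg1 groupV /walk_mass subn0 leqn0.
  have [->|j_gt0] := posnP j; first by rewrite expg0 group1 divff ?pnatr_eq0 -?lt0n.
  by rewrite (negbTE (notKyj _)) ?j_gt0.
rewrite /= coset_mass_cons IHn ?(ltnW lt_nm) // walk_massS //.
set i := if (j <= n.+1)%N then _ else _.
have lt_im : (i < m)%N by rewrite /i; case: ifP; lia.
rewrite (coset_mass_reflect _ (i := i)) ?IHn ?(ltnW lt_nm) //; apply/dvdnP.
by rewrite /i; case: ifP => le_jn1; [exists 1%N | exists 2%N]; lia.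
Qed.

Lemma card_cycle_cosets : #|G| = (#|K| * m)%N.
Proof.
rewrite -(Lagrange sKG) -card_lcosets; congr (_ * _)%N.
have -> : lcosets K G = [set (y ^+ i *: K)%g | i : 'I_m].
  apply/setP=> C; apply/lcosetsP/imsetP => [[x Gx ->]|[i _ ->]].
    have [j /lcoset_eqP ->] := cosets_cover Gx.
    by exists (Ordinal (ltn_pmod j m_gt0)) => //; apply: lcoset_expg_mod.
  by exists (y ^+ i)%g; rewrite ?groupX.
have lcoset_expg_inj (k l : 'I_m) : (y ^+ k *: K = y ^+ l *: K)%g -> (k < l)%N -> False.
  move=> eq_kl lt_kl; have := lcoset_refl K (y ^+ l)%g.
  rewrite -eq_kl mem_lcoset -(subnKC (ltnW lt_kl)) expgD mulKg; apply/negP/notKyj.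
  by rewrite subn_gt0 lt_kl /=; move: (ltn_ord l); lia.
rewrite card_imset ?card_ord // => i i' eq_ii'; apply/val_inj.
case: (ltngtP i i') => // lt_ii'; first by case: (lcoset_expg_inj _ _ eq_ii').
by case: (lcoset_expg_inj _ _ (esym eq_ii')).
Qed.

Lemma mixes_reflection_walk s : mixes s K -> mixes (reflection_walk m.-1 ++ s) G.
Proof.
apply: mixes_cat => //; first exact: bern_seq_reflection_walk.
move=> x Gx; have [j /lcoset_eqP xK] := cosets_cover Gx.
rewrite (eq_coset_mass _ (etrans xK (lcoset_expg_mod j))).
rewrite coset_mass_reflection_walk ?ltn_pmod ?ltn_predL //.
have -> : walk_mass m m.-1 (j %% m) = m%:R^-1.
  rewrite /walk_mass; case: eqP => _; last by rewrite ifT // -ltnS prednK ?ltn_pmod.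
  by rewrite (_ : m - m.-1 = 1)%N ?mul1r //; lia.
by rewrite card_cycle_cosets natrM invfM mulrA divff ?mul1r // pnatr_eq0 -lt0n cardG_gt0.
Qed.

End ReflectionWalk.

Lemma mixes_reflection_ext (K G : {group gT}) y r s :
  K \subset G -> y \in G -> r \in G -> reflects_cosets K r y ->
  {in G, forall x, exists j, (x \in y ^+ j *: K)%g} ->
  mixes s K -> exists s', mixes s' G.
Proof.
move=> sKG Gy Gr r_reflect cover mixK.
have [|m /andP[m_gt0 Kym] m_min] := ex_minnP (P := fun n => (0 < n)%N && (y ^+ n \in K)%g).
  by exists #[y]%g; rewrite order_gt0 expg_order group1.
have notKyj j : (0 < j < m)%N -> (y ^+ j \notin K)%g.
  by case/andP=> j_gt0 lt_jm; apply: contraL lt_jm => Kyj; rewrite -leqNgt m_min ?j_gt0.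
by eexists; exact: (mixes_reflection_walk sKG Gy Gr m_gt0 Kym notKyj r_reflect cover mixK).
Qed.

End Mixing.

Section Semidirect.
Variables (R : realType) (gT : finGroupType).
Local Open Scope group_scope.
Implicit Types (D K : {group gT}) (x y : gT) (s : seq (gT * R)).

Lemma reflects_cosets_conjV K y h : h \in K -> y ^ h = y^-1 -> reflects_cosets K h y.
Proof.
move=> Kh yhV j; rewrite mem_lcoset invgK.
have -> : h^-1 * y ^+ j = (y ^+ j) ^ h * h^-1 by rewrite conjgE -mulgA mulgK.
by rewrite conjXg yhV expVgn mulKVg groupV.
Qed.

Lemma reflects_cosets_sq K y : y ^+ 2 \in K -> reflects_cosets K 1 y.
Proof.
move=> Ky2 j; rewrite mem_lcoset invg1 mul1g invgK -expgD addnn -mul2n expgM.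
by rewrite groupX.
Qed.

Lemma even_index_sq_mem D K : K \subset 'N(D) -> ~~ odd #|K : D| ->
  exists2 w, w \in K :\: D & w ^+ 2 \in D.
Proof.
move=> nDK even_KD.
have [X KDX oX] : {X | X \in K / D & #[X] = 2%N}.
  by apply: Cauchy => //; rewrite card_quotient // dvdn2.
case/morphimP: KDX => w nDw Kw defX; exists w.
  rewrite inE Kw andbT; apply: contra_eqN oX => Dw.
  by rewrite defX /= coset_id ?order1.
by apply: coset_idr; rewrite ?groupX // morphX // -defX -oX expg_order.
Qed.

Variables (A G : {group gT}) (h : gT).
Hypotheses (abA : abelian A) (defG : A ><| <[h]> = G) (oh : #[h] = 2).

Let nAh : h \in 'N(A).
Proof. by have [_ _ /subsetP-> //] := sdprodP defG; rewrite cycle_id. Qed.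

Let hh1 : h * h = 1.
Proof. by rewrite -[h * h]/(h ^+ 2) -oh expg_order. Qed.

Lemma commg_conj_inv x : [~ x, h] ^ h = [~ x, h]^-1.
Proof. by rewrite commgEl conjMg conjVg -conjgM hh1 conjg1 [RHS]invMg invgK. Qed.

Lemma sub_join_cycle D : D \subset A -> D <*> <[h]> \subset G.
Proof.
have [_ defAh _ _] := sdprodP defG.
by move=> sDA; rewrite join_subG -defAh (subset_trans sDA (mulG_subl _ _)) mulG_subr.
Qed.

Lemma index_join_cycle D : D \subset A -> h \in 'N(D) -> #|G : D <*> <[h]>| = #|A : D|.
Proof.
move=> sDA nDh; have [_ defAh _ tiAh] := sdprodP defG.
have tiDh : D :&: <[h]> = 1 by apply/trivgP; rewrite -tiAh setSI.
rewrite -(divgS (sub_join_cycle sDA)) -(divgS sDA) -defAh (TI_cardMg tiAh).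
by rewrite /= norm_joinEr ?cycle_subG // (TI_cardMg tiDh) divnMr.
Qed.

Lemma commg_sub_norm D : D \subset A -> {in A, forall x, [~ x, h] \in D} -> h \in 'N(D).
Proof.
move=> sDA commAhD; rewrite inE; apply/subsetP=> _ /imsetP[d Dd ->].
by rewrite conjg_mulR groupM ?commAhD ?(subsetP sDA).
Qed.

Lemma join_cycle_normal D :
  D \subset A -> {in A, forall x, [~ x, h] \in D} -> D <*> <[h]> <| G.
Proof.
move=> sDA commAhD; have [_ defAh _ _] := sdprodP defG.
have nDA : A \subset 'N(D) := cents_norm (sub_abelian_cent abA sDA).
rewrite /normal sub_join_cycle //= -defAh mul_subG //; last first.
  by rewrite normsY ?normG // cycle_subG commg_sub_norm.
apply/subsetP=> a Aa; rewrite inE conjYg (normP (subsetP nDA a Aa)) -cycleJ.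
rewrite join_subG joing_subl cycle_subG /= conjg_mulR -invgR.
by rewrite groupM ?groupV ?mem_gen // inE ?cycle_id ?commAhD ?orbT.
Qed.

Hypothesis simG : two'_simple G.

Lemma commg_sub_index_even D :
  D \proper A -> {in A, forall x, [~ x, h] \in D} -> ~~ odd #|A : D|.
Proof.
move=> ltDA commAhD; have sDA := proper_sub ltDA.
apply/negP=> odd_AD; have := simG (join_cycle_normal sDA commAhD).
rewrite index_join_cycle ?commg_sub_norm // => /(_ odd_AD) eqDhG.
have /index1g eqDA : #|A : D| = 1%N by rewrite -index_join_cycle ?commg_sub_norm // eqDhG indexgg.
by rewrite eqDA // properE subxx andbF in ltDA.
Qed.

Lemma exists_reflection D : D \proper A -> h \in 'N(D) ->
  exists y r, [/\ y \in A :\: D, y ^ h \in D <*> <[y]>, r \in D <*> <[h]>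
                & reflects_cosets (D <*> <[h]>) r y].
Proof.
move=> ltDA nDh; have sDA := proper_sub ltDA.
have Dy_y y : y \in D <*> <[y]> by rewrite mem_gen // inE cycle_id orbT.
have [/exists_inP[x Ax notDc] | /exists_inPn commAhD] := boolP [exists x in A, ([~ x, h] \notin D)].
  have Dh_h : h \in D <*> <[h]> by apply: Dy_y.
  exists [~ x, h], h; split=> //; last exact: reflects_cosets_conjV (commg_conj_inv x).
    by rewrite inE notDc commgEl groupM ?groupV ?memJ_norm.
  by rewrite commg_conj_inv groupV.
have {}commAhD : {in A, forall x, [~ x, h] \in D} by move=> x /commAhD; rewrite negbK.
have nDA : A \subset 'N(D) := cents_norm (sub_abelian_cent abA sDA).
have [w /setDP[Aw notDw] Dw2] := even_index_sq_mem nDA (commg_sub_index_even ltDA commAhD).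
exists w, 1; split; rewrite ?inE ?notDw ?group1 //.
  by rewrite conjg_mulR groupM ?Dy_y // mem_gen // inE commAhD.
by apply: reflects_cosets_sq; rewrite mem_gen // inE Dw2.
Qed.

Lemma join_cycle_cover D y : D \subset A -> y \in A -> h \in 'N(D <*> <[y]>) ->
  {in (D <*> <[y]>) <*> <[h]>, forall x, exists j, x \in y ^+ j *: (D <*> <[h]>)}.
Proof.
move=> sDA Ay nDyh x; rewrite norm_joinEr ?cycle_subG // => /mulsgP[u v Dyu hv ->].
have nDy : <[y]> \subset 'N(D).
  by rewrite cents_norm // (subset_trans _ (sub_abelian_cent abA sDA)) ?cycle_subG.
have : u \in D * <[y]> by rewrite -(norm_joinEr nDy).
case/mulsgP=> d _ Dd /cycleP[j ->] ->.
exists j; rewrite mem_lcoset ((centsP abA) d (subsetP sDA d Dd) _ (groupX j Ay)) -!mulgA mulKg.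
by rewrite groupM ?mem_gen // inE ?Dd ?hv ?orbT.
Qed.

Lemma mixes_join_step D s : D \proper A -> h \in 'N(D) -> mixes s (D <*> <[h]>) ->
  exists2 D' : {group gT}, [/\ D \proper D', D' \subset A & h \in 'N(D')]
                         & exists s', mixes s' (D' <*> <[h]>).
Proof.
move=> ltDA nDh mixDh; have sDA := proper_sub ltDA.
have [y [r [/setDP[Ay notDy] yhDy Dhr r_reflect]]] := exists_reflection ltDA nDh.
have Dy_y : y \in D <*> <[y]> by rewrite mem_gen // inE cycle_id orbT.
have nDyh : h \in 'N(D <*> <[y]>).
  by rewrite inE conjYg (normP nDh) -cycleJ join_subG joing_subl cycle_subG.
have sDhDyh : D <*> <[h]> \subset (D <*> <[y]>) <*> <[h]>.
  by rewrite join_subG (subset_trans (joing_subl D <[y]>) (joing_subl _ _)) joing_subr.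
exists (D <*> <[y]>)%G.
  split=> //; last by rewrite join_subG sDA cycle_subG.
  by apply/properP; split; [exact: joing_subl | exists y].
apply: (mixes_reflection_ext sDhDyh _ _ r_reflect (join_cycle_cover sDA Ay nDyh) mixDh).
  by rewrite (subsetP (joing_subl _ _)).
exact: (subsetP sDhDyh).
Qed.

Lemma mixes_cycle : exists s, mixes s <[h]>.
Proof.
apply: (mixes_reflection_ext (sub1G _) (cycle_id h) (group1 _) _ _ (mixes1 R gT)).
  by apply: reflects_cosets_sq; rewrite -oh expg_order group1.
by move=> _ /cycleP[j ->]; exists j; rewrite lcoset_refl.
Qed.

Lemma mixes_semidirect : exists s, mixes s G.
Proof.
rewrite -(sdprodWY defG).
suff mixA n D : (#|A| - #|D| <= n)%N -> D \subset A -> h \in 'N(D) ->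
    (exists s, mixes s (D <*> <[h]>)) -> exists s, mixes s (A <*> <[h]>).
  by apply: (mixA _ 1%G (leqnn _)); rewrite ?sub1G ?norm1 ?inE ?joing1G //; apply: mixes_cycle.
elim: n D => [|n IHn] D le_AD sDA nDh [s mixDh].
all: have [eqDA|neDA] := eqVneq (D : {set gT}) A; first by exists s; rewrite -eqDA.
all: have ltDA : D \proper A by rewrite properEneq neDA.
  by have := proper_card ltDA; lia.
have [D' [ltDD' sD'A nD'h] mixD'h] := mixes_join_step ltDA nDh mixDh.
by apply: (IHn D') => //; have := proper_card ltDD'; have := subset_leq_card sD'A; lia.
Qed.

End Semidirect.

Theorem mainTheorem19 (R : realType) (gT : finGroupType) (G A H : {group gT}) :
  abelian A -> #|H| = 2 -> (A ><| H)%g = G ->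
  (mixable R G <-> two'_simple G).
Proof.
move=> abA oH defG.
have /cyclicP[h defH] : cyclic H by rewrite prime_cyclic ?oH.
have oh : #[h]%g = 2 by rewrite -oH defH.
rewrite defH in defG; rewrite mixableP.
split=> [[s /mixes_two'_simple //] | simG].
exact: mixes_semidirect abA defG oh simG.
Qed.
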